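(* Let $f:\mathbb{R}\to\mathbb{R}$ be twice continuously differentiable, and let $u_L<u_U$ with $f''>0$ on $(u_L,u_U)$ or $f''<0$ on $(u_L,u_U)$. Let $x_1<x_2=x_3<x_4$, set $x_{23}=x_2$, and let $u_1,u_2,u_3,u_4\in[u_L,u_U]$. Then there exists $u_{23}$ in the closed interval with endpoints $u_2$ and $u_3$ such that $$(x_{23}-x_1)\,a(u_1,u_{23})+(x_4-x_{23})\,a(u_{23},u_4)=(x_2-x_1)\,a(u_1,u_2)+(x_3-x_2)\,a(u_2,u_3)+(x_4-x_3)\,a(u_3,u_4),$$ where $a$ is the nonlinear average defined below (note the middle term on the right vanishes since $x_2=x_3$).
   Context: For $g:\mathbb{R}\to\mathbb{R}$ write $[g(u)]_{a}^{b}=g(b)-g(a)$. For $u_1\neq u_2$ the nonlinear average is $a(u_1,u_2)=\frac{[f'(u)u-f(u)]_{u_1}^{u_2}}{[f'(u)]_{u_1}^{u_2}}=\frac{\int_{u_1}^{u_2}f''(u)u\,\mathrm{d}u}{\int_{u_1}^{u_2}f''(u)\,\mathrm{d}u}$, and $a(u,u)=u$. *)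

From Stdlib Require Import Reals.
From Coquelicot Require Import Coquelicot.
Open Scope R_scope.

Definition bracket (g : R -> R) (a b : R) : R := g b - g a.

Definition nl_avg (f : R -> R) (u1 u2 : R) : R :=
  if Req_EM_T u1 u2 then u1
  else bracket (fun u => Derive f u * u - f u) u1 u2
       / bracket (Derive f) u1 u2.

(* a(w, v) is the abscissa where the tangents to f at w and v meet.  With
   f'' > 0 on [uL, uU], f' is strictly increasing there, so by strict convexity
   a(w, v) lies between w and v, and the splitting identity
     a(w, v') (f'(v') - f'(w)) = a(w, v) (f'(v) - f'(w)) + a(v, v') (f'(v') - f'(v))
   makes a(w, .) nondecreasing.  Hence t |-> A a(u1, t) + B a(t, u4) is
   continuous and nondecreasing on [uL, uU] for A, B >= 0, so by the
   intermediate value theorem it takes the value A a(u1, u2) + B a(u3, u4),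
   which lies between its values at u2 and u3.  The concave case follows by
   replacing f with -f, which leaves a unchanged. *)

From Stdlib Require Import Reals Lra Psatz.
From Coquelicot Require Import Coquelicot.
Open Scope R_scope.

Lemma mediant_between (q1 q2 D1 D2 : R) : 0 < D1 -> 0 < D2 -> q1 <= q2 ->
  q1 <= (q1 * D1 + q2 * D2) / (D1 + D2) <= q2.
Proof.
  intros HD1 HD2 Hq. split.
  - apply Rle_div_r; nra.
  - apply Rle_div_l; nra.
Qed.

Lemma mixed_combination_between (A B p1 q1 p2 q2 : R) : 0 <= A -> 0 <= B ->
  (p1 <= q1 /\ p2 <= q2) \/ (q1 <= p1 /\ q2 <= p2) ->
  Rmin (A * p1 + B * p2) (A * q1 + B * q2) <= A * p1 + B * q2
    <= Rmax (A * p1 + B * p2) (A * q1 + B * q2).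
Proof. intros HA HB Hpq. unfold Rmin, Rmax. destruct Rle_dec, Hpq; nra. Qed.

Lemma nl_avg_diag (f : R -> R) (w : R) : nl_avg f w w = w.
Proof. unfold nl_avg. destruct Req_EM_T; [reflexivity | contradiction]. Qed.

Lemma nl_avg_neq (f : R -> R) (w v : R) : w <> v -> nl_avg f w v =
  ((Derive f v * v - f v) - (Derive f w * w - f w)) / (Derive f v - Derive f w).
Proof. intros H. unfold nl_avg, bracket. destruct Req_EM_T; [contradiction | reflexivity]. Qed.

Lemma nl_avg_sym (f : R -> R) (w v : R) : nl_avg f w v = nl_avg f v w.
Proof.
  destruct (Req_dec w v) as [<- | Hne]; [reflexivity |].
  rewrite !nl_avg_neq by auto.
  replace (Derive f w - Derive f v) with (- (Derive f v - Derive f w)) by ring.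
  unfold Rdiv. rewrite Rinv_opp. ring.
Qed.

Lemma nl_avg_opp (f : R -> R) (w v : R) : nl_avg (fun x => - f x) w v = nl_avg f w v.
Proof.
  destruct (Req_dec w v) as [<- | Hne]; [rewrite !nl_avg_diag; reflexivity |].
  rewrite !nl_avg_neq, !Derive_opp by auto.
  replace (- Derive f v - - Derive f w) with (- (Derive f v - Derive f w)) by ring.
  unfold Rdiv. rewrite Rinv_opp. ring.
Qed.

Definition clamp (m M t : R) : R := Rmin M (Rmax m t).

Lemma clamp_range (m M t : R) : m <= M -> m <= clamp m M t <= M.
Proof. intros. unfold clamp, Rmin, Rmax. repeat destruct Rle_dec; lra. Qed.

Lemma clamp_id (m M t : R) : m <= t <= M -> clamp m M t = t.
Proof. intros. unfold clamp, Rmin, Rmax. repeat destruct Rle_dec; lra. Qed.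

Lemma clamp_dist (m M t s : R) : m <= M ->
  Rabs (clamp m M t - clamp m M s) <= Rabs (t - s).
Proof.
  intros. unfold clamp, Rmin, Rmax. repeat destruct Rle_dec;
  unfold Rabs; repeat destruct Rcase_abs; lra.
Qed.

Lemma continuity_pt_clamp (m M t : R) : m <= M -> continuity_pt (clamp m M) t.
Proof.
  intros HmM eps Heps. exists eps. split; [exact Heps |].
  intros s [_ Hs]. simpl in *. unfold R_dist in *.
  eapply Rle_lt_trans; [apply clamp_dist; exact HmM | exact Hs].
Qed.

Section StrictlyConvex.

Variables (f : R -> R) (uL uU : R).
Hypothesis ex_derive_f : forall x, ex_derive f x.
Hypothesis ex_derive_Derive_f : forall x, ex_derive (Derive f) x.
Hypothesis Derive2_pos : forall u, uL < u < uU -> Derive_n f 2 u > 0.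

Lemma Derive_lt_Derive (x y : R) : uL <= x -> x < y -> y <= uU ->
  Derive f x < Derive f y.
Proof.
  intros Hx Hxy Hy.
  destruct (MVT_cor2 (Derive f) (Derive_n f 2) x y Hxy) as [c [Hc Hcxy]].
  { intros c _. apply is_derive_Reals, Derive_correct, ex_derive_Derive_f. }
  assert (0 < Derive_n f 2 c * (y - x)) by (apply Rmult_lt_0_compat; [apply Derive2_pos | ]; lra).
  lra.
Qed.

Lemma tangent_lt (w v : R) : uL <= w <= uU -> uL <= v <= uU -> w <> v ->
  f w + Derive f w * (v - w) < f v.
Proof.
  intros Hw Hv Hne.
  assert (Hf' : forall c, derivable_pt_lim f c (Derive f c))
    by (intros c; apply is_derive_Reals, Derive_correct, ex_derive_f).
  destruct (Rlt_or_le w v) as [Hlt | Hle].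
  - destruct (MVT_cor2 f (Derive f) w v Hlt (fun c _ => Hf' c)) as [c [Hc Hcwv]].
    assert (Derive f w < Derive f c) by (apply Derive_lt_Derive; lra).
    nra.
  - destruct (MVT_cor2 f (Derive f) v w ltac:(lra) (fun c _ => Hf' c)) as [c [Hc Hcvw]].
    assert (Derive f c < Derive f w) by (apply Derive_lt_Derive; lra).
    nra.
Qed.

Lemma nl_avg_between (w v : R) : uL <= w -> w < v -> v <= uU ->
  w <= nl_avg f w v <= v.
Proof.
  intros Hw Hwv Hv. rewrite nl_avg_neq by lra.
  assert (Derive f w < Derive f v) by (apply Derive_lt_Derive; lra).
  assert (f w + Derive f w * (v - w) < f v) by (apply tangent_lt; lra).
  assert (f v + Derive f v * (w - v) < f w) by (apply tangent_lt; lra).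
  split; [apply Rle_div_r | apply Rle_div_l]; nra.
Qed.

Lemma nl_avg_dist (w v : R) : uL <= w <= uU -> uL <= v <= uU ->
  Rabs (nl_avg f w v - w) <= Rabs (v - w).
Proof.
  intros Hw Hv. destruct (Rtotal_order w v) as [Hlt | [<- | Hgt]].
  - assert (B := nl_avg_between w v ltac:(lra) Hlt ltac:(lra)).
    unfold Rabs; repeat destruct Rcase_abs; lra.
  - rewrite nl_avg_diag. lra.
  - rewrite nl_avg_sym. assert (B := nl_avg_between v w ltac:(lra) Hgt ltac:(lra)).
    unfold Rabs; repeat destruct Rcase_abs; lra.
Qed.

Lemma nl_avg_split_between (w v v' : R) : uL <= w -> w < v -> v < v' -> v' <= uU ->
  nl_avg f w v <= nl_avg f w v' <= nl_avg f v v'.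
Proof.
  intros Hw Hwv Hvv' Hv'.
  assert (Derive f w < Derive f v) by (apply Derive_lt_Derive; lra).
  assert (Derive f v < Derive f v') by (apply Derive_lt_Derive; lra).
  assert (Hle : nl_avg f w v <= nl_avg f v v').
  { apply Rle_trans with v; [apply nl_avg_between | apply nl_avg_between]; lra. }
  replace (nl_avg f w v') with
    ((nl_avg f w v * (Derive f v - Derive f w) + nl_avg f v v' * (Derive f v' - Derive f v))
     / ((Derive f v - Derive f w) + (Derive f v' - Derive f v))).
  - apply mediant_between; lra.
  - rewrite !nl_avg_neq by lra. field. lra.
Qed.

Lemma nl_avg_le_r (w v v' : R) : uL <= w <= uU -> uL <= v -> v <= v' -> v' <= uU ->
  nl_avg f w v <= nl_avg f w v'.
Proof.
  intros Hw Hv Hvv' Hv'.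
  destruct (Req_dec v v') as [<- | Hne]; [lra |].
  destruct (Rtotal_order w v) as [Hwv | [<- | Hvw]].
  - apply (nl_avg_split_between w v v'); lra.
  - rewrite nl_avg_diag. apply (nl_avg_between w v'); lra.
  - destruct (Rtotal_order w v') as [Hwv' | [<- | Hv'w]].
    + rewrite nl_avg_sym. apply Rle_trans with w; [apply (nl_avg_between v w) | apply (nl_avg_between w v')]; lra.
    + rewrite nl_avg_diag, nl_avg_sym. apply (nl_avg_between v w); lra.
    + rewrite !(nl_avg_sym f w). apply (nl_avg_split_between v v' w); lra.
Qed.

Lemma continuity_pt_nl_avg (w v : R) : uL <= w <= uU -> uL <= v <= uU -> w <> v ->
  continuity_pt (nl_avg f w) v.
Proof.
  intros Hw Hv Hne. apply continuity_pt_filterlim.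
  assert (Derive f v - Derive f w <> 0).
  { destruct (Rtotal_order w v) as [H | [H | H]]; [ | contradiction | ].
    - assert (Derive f w < Derive f v) by (apply Derive_lt_Derive; lra). lra.
    - assert (Derive f v < Derive f w) by (apply Derive_lt_Derive; lra). lra. }
  apply (continuous_ext_loc _ (fun s =>
    ((Derive f s * s - f s) - (Derive f w * w - f w)) / (Derive f s - Derive f w))).
  - assert (Hpos : 0 < Rabs (v - w)) by (apply Rabs_pos_lt; lra).
    exists (mkposreal _ Hpos). intros s Hs.
    rewrite nl_avg_neq; [reflexivity |]. intros <-.
    change (Rabs (w - v) < Rabs (v - w)) in Hs.
    rewrite Rabs_minus_sym in Hs. lra.
  - apply (@ex_derive_continuous R_AbsRing R_NormedModule). auto_derive. repeat split; auto.
Qed.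

(* Clamping makes the function continuous on all of R, as the IVT requires;
   at t = w continuity comes from the bound |a(w, v) - w| <= |v - w|. *)
Lemma continuity_pt_nl_avg_clamp (w t : R) : uL <= uU -> uL <= w <= uU ->
  continuity_pt (fun s => nl_avg f w (clamp uL uU s)) t.
Proof.
  intros HLU Hw.
  assert (Ht := clamp_range uL uU t HLU).
  destruct (Req_dec (clamp uL uU t) w) as [Hct | Hne].
  - intros eps Heps. exists eps. split; [exact Heps |].
    intros s [_ Hs]. simpl in *. unfold R_dist in *.
    rewrite Hct, nl_avg_diag.
    assert (Hs' := clamp_range uL uU s HLU).
    eapply Rle_lt_trans; [apply nl_avg_dist; lra |].
    rewrite <- Hct. eapply Rle_lt_trans; [apply clamp_dist; exact HLU | exact Hs].
  - apply (continuity_pt_comp (clamp uL uU) (nl_avg f w)).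
    + apply continuity_pt_clamp, HLU.
    + apply continuity_pt_nl_avg; lra.
Qed.

Lemma nl_avg_merge_convex (A B u1 u2 u3 u4 : R) : uL <= uU -> 0 <= A -> 0 <= B ->
  uL <= u1 <= uU -> uL <= u2 <= uU -> uL <= u3 <= uU -> uL <= u4 <= uU ->
  exists u23, Rmin u2 u3 <= u23 <= Rmax u2 u3 /\
    A * nl_avg f u1 u23 + B * nl_avg f u23 u4 = A * nl_avg f u1 u2 + B * nl_avg f u3 u4.
Proof.
  intros HLU HA HB H1 H2 H3 H4.
  set (h t := A * nl_avg f u1 (clamp uL uU t) + B * nl_avg f u4 (clamp uL uU t)).
  assert (Hh : continuity h).
  { intros t. apply continuity_pt_plus; apply continuity_pt_scal;
      apply continuity_pt_nl_avg_clamp; lra. }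
  assert (Hcomonotone : nl_avg f u1 u2 <= nl_avg f u1 u3 /\ nl_avg f u4 u2 <= nl_avg f u4 u3 \/
                        nl_avg f u1 u3 <= nl_avg f u1 u2 /\ nl_avg f u4 u3 <= nl_avg f u4 u2).
  { destruct (Rle_lt_dec u2 u3); [left | right]; split; apply nl_avg_le_r; lra. }
  destruct (IVT_gen h u2 u3 (A * nl_avg f u1 u2 + B * nl_avg f u3 u4) Hh)
    as [u23 [Hu23 Hhu23]].
  - unfold h. rewrite !clamp_id, (nl_avg_sym f u3) by lra.
    apply mixed_combination_between; assumption.
  - exists u23. split; [exact Hu23 |].
    rewrite <- Hhu23. unfold h. rewrite clamp_id, (nl_avg_sym f u4).
    + reflexivity.
    + unfold Rmin, Rmax in Hu23. destruct Rle_dec; lra.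
Qed.

End StrictlyConvex.

Lemma nl_avg_merge_concave (f : R -> R) (uL uU A B u1 u2 u3 u4 : R) :
  (forall x, ex_derive f x) -> (forall x, ex_derive (Derive f) x) ->
  (forall u, uL < u < uU -> Derive_n f 2 u < 0) -> uL <= uU -> 0 <= A -> 0 <= B ->
  uL <= u1 <= uU -> uL <= u2 <= uU -> uL <= u3 <= uU -> uL <= u4 <= uU ->
  exists u23, Rmin u2 u3 <= u23 <= Rmax u2 u3 /\
    A * nl_avg f u1 u23 + B * nl_avg f u23 u4 = A * nl_avg f u1 u2 + B * nl_avg f u3 u4.
Proof.
  intros Hf HDf Hneg. intros.
  assert (HDopp : forall x, Derive (fun y => - f y) x = - Derive f x) by apply Derive_opp.
  destruct (nl_avg_merge_convex (fun x => - f x) uL uU) with A B u1 u2 u3 u4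
    as [u23 Hu23]; auto.
  - intros x. apply (@ex_derive_opp R_AbsRing R_NormedModule f), Hf.
  - intros x. apply (ex_derive_ext (fun y => - Derive f y)); [intros; symmetry; apply HDopp |].
    apply (@ex_derive_opp R_AbsRing R_NormedModule), HDf.
  - intros u Hu. rewrite Derive_n_opp. specialize (Hneg u Hu). lra.
  - exists u23. rewrite !nl_avg_opp in Hu23. exact Hu23.
Qed.

Theorem lemma3 (f : R -> R) (uL uU x1 x2 x3 x4 u1 u2 u3 u4 : R) :
  (* f is twice continuously differentiable on R *)
  (forall x, ex_derive f x) ->
  (forall x, ex_derive (Derive f) x) ->
  (forall x, continuous (Derive_n f 2) x) ->
  uL < uU ->
  ((forall u, uL < u < uU -> Derive_n f 2 u > 0) \/
   (forall u, uL < u < uU -> Derive_n f 2 u < 0)) ->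
  x1 < x2 -> x2 = x3 -> x3 < x4 ->
  uL <= u1 <= uU -> uL <= u2 <= uU -> uL <= u3 <= uU -> uL <= u4 <= uU ->
  let x23 := x2 in
  exists u23, Rmin u2 u3 <= u23 <= Rmax u2 u3 /\
    (x23 - x1) * nl_avg f u1 u23 + (x4 - x23) * nl_avg f u23 u4
    = (x2 - x1) * nl_avg f u1 u2 + (x3 - x2) * nl_avg f u2 u3
      + (x4 - x3) * nl_avg f u3 u4.
Proof.
  intros Hf HDf _ HLU Hsign H12 <- H24 H1 H2 H3 H4 x23.
  assert (Hmerge : exists u23, Rmin u2 u3 <= u23 <= Rmax u2 u3 /\
    (x2 - x1) * nl_avg f u1 u23 + (x4 - x2) * nl_avg f u23 u4
    = (x2 - x1) * nl_avg f u1 u2 + (x4 - x2) * nl_avg f u3 u4).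
  { destruct Hsign as [Hpos | Hneg].
    - apply (nl_avg_merge_convex f uL uU); auto; lra.
    - apply (nl_avg_merge_concave f uL uU); auto; lra. }
  destruct Hmerge as [u23 [Hu23 Heq]].
  exists u23. split; [exact Hu23 |]. unfold x23. rewrite Heq. ring.
Qed.
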